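(* In Ruleset A, for all integers $i,j>0$, $\langle \mathrm{Nim}(i,0),\mathrm{Nim}(0,j)\rangle_A\equiv *(\max(i,j)-1+\delta_{i,j})$, where $\delta_{i,j}$ is the Kronecker delta.
   Context: Two-heap Nim: $\mathrm{Nim}(x_1,x_2)$ has heaps of $x_1$ and $x_2$ tokens; the classical move $(h,-j)$, $h\in\{1,2\}$, $j\ge1$, removes $j$ tokens from heap $h$ and is illegal if heap $h$ has fewer than $j$ tokens. Quantum variation: a position is a nonempty finite set $\langle G_1,\ldots,G_n\rangle$ of classical positions; a classical move is legal if legal in some $G_i$; a Q-move is a nonempty set of legal classical moves (possibly on different heaps), leading to the superposition of all legal results of applying one of its moves to one of the $G_i$. Ruleset A (subscript $A$): only Q-moves consisting of at least two distinct classical moves are allowed. The player with no allowed Q-move loses. $\equiv$ is game equivalence (same outcome in every disjunctive sum), $*k$ the value of a classical Nim heap of $k$ tokens. *)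

From HB Require Import structures.
From mathcomp Require Import all_boot all_order.
From mathcomp Require Import finmap.

Set Implicit Arguments.
Unset Strict Implicit.
Unset Printing Implicit Defensive.

Local Open Scope fset_scope.

(** A game is given by a state type and an option relation [mv s t]
    ("t is an option of s").  [win] = the player to move wins (N-position),
    [lose] = the player to move loses (P-position); a player with no move loses. *)
Inductive win {T : Type} (mv : T -> T -> Prop) : T -> Prop :=
  | winI s t : mv s t -> lose mv t -> win mv s
with lose {T : Type} (mv : T -> T -> Prop) : T -> Prop :=
  | loseI s : (forall t, mv s t -> win mv t) -> lose mv s.

Definition summv {S T : Type} (mvS : S -> S -> Prop) (mvT : T -> T -> Prop)
  (p q : S * T) : Prop :=
  (mvS p.1 q.1 /\ p.2 = q.2) \/ (p.1 = q.1 /\ mvT p.2 q.2).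

Definition game_equiv {S H : Type} (mvS : S -> S -> Prop) (s0 : S)
  (mvH : H -> H -> Prop) (h0 : H) : Prop :=
  forall (T : Type) (mvT : T -> T -> Prop),
    well_founded (fun a b => mvT b a) ->
    forall t0 : T,
      (win (summv mvS mvT) (s0, t0) <-> win (summv mvH mvT) (h0, t0)).

(** Classical Nim heap *k : state = number of tokens, move to any smaller number. *)
Definition nim_mv (a b : nat) : Prop := (b < a)%N.

(** Classical position (x1, x2). Classical move (h, j) : remove j tokens from
    heap h, with h \in {1,2} and j >= 1. *)
Definition cpos := (nat * nat)%type.
Definition cmove := (nat * nat)%type.

Definition valid_move (m : cmove) : bool :=
  ((m.1 == 1) || (m.1 == 2)) && (0 < m.2).

Definition legal (m : cmove) (g : cpos) : bool :=
  valid_move m &&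
  (if m.1 == 1 then m.2 <= g.1 else m.2 <= g.2).

Definition apply_move (m : cmove) (g : cpos) : cpos :=
  if m.1 == 1 then (g.1 - m.2, g.2) else (g.1, g.2 - m.2).

Definition qpos := {fset cpos}.

Definition qmoveA (P Q : qpos) : Prop :=
  exists M : {fset cmove},
    (2 <= #|` M|)%N /\
    (forall m, m \in M -> exists2 g, g \in P & legal m g) /\
    (forall g', g' \in Q <->
       exists m g, [/\ m \in M, g \in P, legal m g & g' = apply_move m g]).

From Stdlib Require Import Wf_nat.
From mathcomp Require Import all_boot all_order.
From mathcomp Require Import finmap zify.
Local Open Scope fset_scope.

(* Call a quantum position "on the axes" if each of its classical positions has
   an empty heap, and let p and q be the largest sizes of heaps 1 and 2 in it.
   A Ruleset-A move from such a position stays on the axes and lowers every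
   nonzero maximum; if one heap is empty throughout, the two distinct moves
   required both act on the other heap and one of them leaves a token.  Hence the
   valuation max(p,q) - [p != q] changes along every move, and every smaller value
   is reached by removing suitable amounts from one or both heaps.  A valuation
   with these two properties is a Nim value even though options may have larger
   values: such an option can always be answered by a move back to the original
   value. *)

Lemma winE T (mv : T -> T -> Prop) s : win mv s <-> exists2 t, mv s t & lose mv t.
Proof. by split=> [[s' t mt lt] | [t mt lt]]; [exists t | apply: winI mt lt]. Qed.

Lemma loseE T (mv : T -> T -> Prop) s : lose mv s <-> forall t, mv s t -> win mv t.
Proof. by split=> [[] | H]; last exact: loseI. Qed.

Section NimValuation.
Context {S : Type} {mv : S -> S -> Prop} {Inv : S -> Prop} {val meas : S -> nat}.
Hypothesis mv_spec : forall {s t}, Inv s -> mv s t ->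
  [/\ Inv t, meas t < meas s & val t != val s].
Hypothesis val_mex : forall {s k}, Inv s -> k < val s -> exists2 t, mv s t & val t = k.

Section SumWith.
Variables (T : Type) (mvT : T -> T -> Prop).

Definition same_outcome s t :=
  (win (summv mv mvT) (s, t) <-> win (summv nim_mv mvT) (val s, t)) /\
  (lose (summv mv mvT) (s, t) <-> lose (summv nim_mv mvT) (val s, t)).

Lemma same_outcome_step s t : Inv s ->
  (forall s', Inv s' -> meas s' < meas s -> same_outcome s' t) ->
  (forall t', mvT t t' -> same_outcome s t') -> same_outcome s t.
Proof.
move=> Is IHs IHt.
have IHmv s' : mv s s' -> same_outcome s' t.
  by case/(mv_spec Is) => Is' lt _; apply: IHs.
(* An option [s'] of larger value is answered by the move back to value [val s]. *)
have IHmv2 s' s'' : mv s s' -> mv s' s'' -> same_outcome s'' t.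
  case/(mv_spec Is) => Is' lt' _ /(mv_spec Is') [Is'' lt'' _].
  by apply: IHs => //; apply: ltn_trans lt'.
split; split.
- case/winE=> -[s' t'] [[/= ms' <-] | [/= <- mt']] L.
  + have [Is' _ ne] := mv_spec Is ms'; case: ltngtP ne => // [lt | gt] _.
      by apply/winE; exists (val s', t); [left | apply/(IHmv _ ms').2].
    have [s'' ms'' <-] := val_mex Is' gt.
    by apply/(IHmv2 _ _ ms' ms'').1; move/loseE: L; apply; left.
  + by apply/winE; exists (val s, t'); [right | apply/(IHt _ mt').2].
- case/winE=> -[k t'] [[/= lt <-] | [/= <- mt']] L.
  + have [s' ms' vs'] := val_mex Is lt.
    by apply/winE; exists (s', t); [left | apply/(IHmv _ ms').2; rewrite vs'].
  + by apply/winE; exists (s, t'); [right | apply/(IHt _ mt').2].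
- move/loseE=> L; apply/loseE => -[k t'] [[/= lt <-] | [/= <- mt']].
  + have [s' ms' <-] := val_mex Is lt.
    by apply/(IHmv _ ms').1; apply: L; left.
  + by apply/(IHt _ mt').1; apply: L; right.
- move/loseE=> L; apply/loseE => -[s' t'] [[/= ms' <-] | [/= <- mt']].
  + have [Is' _ ne] := mv_spec Is ms'; case: ltngtP ne => // [lt | gt] _.
      by apply/(IHmv _ ms').1; apply: L; left.
    have [s'' ms'' vs''] := val_mex Is' gt.
    apply/winE; exists (s'', t); first by left.
    by apply/(IHmv2 _ _ ms' ms'').2; rewrite vs''; apply/loseE.
  + by apply/(IHt _ mt').1; apply: L; right.
Qed.

End SumWith.

Lemma nim_valuation_equiv {s} : Inv s -> game_equiv mv s nim_mv (val s).
Proof.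
move=> Is T mvT wfT t; suff [] : same_outcome _ mvT s t by [].
elim/(well_founded_induction wfT): t s Is => t IHt.
elim/(well_founded_induction (well_founded_ltof _ meas)) => s IHs Is.
apply: same_outcome_step => // [s' Is' lt | t' mt]; last exact: IHt.
by apply: IHs => //; apply/ltP.
Qed.

End NimValuation.

Lemma bigmax_seq_attained {I : eqType} {r : seq I} {F : I -> nat} :
  0 < \max_(i <- r) F i -> exists2 i, i \in r & \max_(i <- r) F i = F i.
Proof.
rewrite big_seq; elim/big_ind: _ => [// | m1 m2 IH1 IH2 | i ri _]; last by exists i.
by rewrite /maxn; case: (ltnP m1 m2).
Qed.

Lemma cardfs_gt1_pair {K : choiceType} {A : {fset K}} :
  1 < #|` A| -> exists x y, [/\ x \in A, y \in A & x != y].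
Proof.
move=> A2; have /fset0Pn [x Ax] : A != fset0 by rewrite -cardfs_gt0 ltnW.
have /fset0Pn [y /fsetD1P [yx Ay]] : A `\ x != fset0.
  by rewrite -cardfs_gt0; move: A2; rewrite (cardfsD1 x) Ax.
by exists x, y; rewrite eq_sym.
Qed.

(* [coord true] reads heap 1 and [coord false] heap 2, so a move [m] acts on
   heap [coord (m.1 == 1)]. *)
Definition coord (b : bool) (g : cpos) : nat := if b then g.1 else g.2.

Lemma legalE m g : legal m g = valid_move m && (m.2 <= coord (m.1 == 1) g).
Proof. by rewrite /legal; case: (m.1 == 1). Qed.

Lemma coord_apply_move b m g :
  coord b (apply_move m g) = if b == (m.1 == 1) then coord b g - m.2 else coord b g.
Proof. by rewrite /apply_move; case: b; case: (m.1 == 1). Qed.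

Lemma valid_move_eq m1 m2 : valid_move m1 -> valid_move m2 ->
  (m1.1 == 1) = (m2.1 == 1) -> m1.2 = m2.2 -> m1 = m2.
Proof.
case: m1 m2 => [h1 a1] [h2 a2]; rewrite /valid_move /=.
by move=> /andP [/orP [] /eqP -> _] /andP [/orP [] /eqP -> _] // _ ->.
Qed.

Definition hmove (b : bool) (a : nat) : cmove := (if b then 1 else 2, a).

Lemma hmove_side b a : ((hmove b a).1 == 1) = b.
Proof. by case: b. Qed.

Lemma legal_hmove b a g : legal (hmove b a) g = (0 < a) && (a <= coord b g).
Proof. by rewrite legalE hmove_side; case: b. Qed.

Definition on_axes (P : qpos) : Prop := forall g, g \in P -> g.1 = 0 \/ g.2 = 0.

Lemma on_axes_coord {P g b} :
  on_axes P -> g \in P -> 0 < coord (~~ b) g -> coord b g = 0.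
Proof. by move=> axP /axP; case: b => /= -[] ->. Qed.

Definition heapmax (b : bool) (P : qpos) : nat := \max_(g <- P) coord b g.

Lemma heapmax_ge b {P g} : g \in P -> coord b g <= heapmax b P.
Proof. by move=> Pg; apply: leq_bigmax_seq. Qed.

Lemma heapmax_leP b P n :
  reflect (forall g, g \in P -> coord b g <= n) (heapmax b P <= n).
Proof. by apply: (iffP (bigmax_leqP_seq _ _ _ _)) => le g Pg => [|_]; apply: le. Qed.

Lemma heapmax_fset2 b (g1 g2 : cpos) :
  heapmax b [fset g1; g2] = maxn (coord b g1) (coord b g2).
Proof.
apply/anti_leq; rewrite geq_max !heapmax_ge ?fset21 ?fset22 // !andbT.
apply/heapmax_leP => g; rewrite in_fset2 leq_max.
by move=> /orP [] /eqP ->; rewrite leqnn ?orbT.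
Qed.

Lemma hmove_legal_in b a P :
  0 < a <= heapmax b P -> exists2 g, g \in P & legal (hmove b a) g.
Proof.
case/andP=> a0 le; have [g Pg eg] := bigmax_seq_attained (leq_trans a0 le).
by exists g; rewrite // legal_hmove a0 -eg.
Qed.

Definition qresult (M : {fset cmove}) (P : qpos) : qpos :=
  [fset apply_move m g | m in M, g in P & legal m g].

Lemma qresultP M P g' : reflect
  (exists m g, [/\ m \in M, g \in P, legal m g & g' = apply_move m g])
  (g' \in qresult M P).
Proof.
apply: (iffP (imfset2P _ _ _ _ _)) => [[m Mm [g]] | [m [g [Mm Pg lmg ->]]]].
  by rewrite inE => /andP [Pg lmg] ->; exists m, g.
by exists m => //; exists g; rewrite // inE Pg.
Qed.

Lemma qmoveAE P Q : qmoveA P Q <-> exists M : {fset cmove},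
  [/\ 1 < #|` M|, forall m, m \in M -> exists2 g, g \in P & legal m g & Q = qresult M P].
Proof.
split=> [[M [M2 [legM eQ]]] | [M [M2 legM ->]]]; exists M.
  by split=> //; apply/fsetP => g'; apply/idP/qresultP => /eQ.
by do 2!split=> //; move=> g'; split=> /qresultP.
Qed.

Lemma qmoveA_pair P m1 m2 : m1 != m2 ->
  (exists2 g, g \in P & legal m1 g) -> (exists2 g, g \in P & legal m2 g) ->
  qmoveA P (qresult [fset m1; m2] P).
Proof.
move=> m12 leg1 leg2; apply/qmoveAE; exists [fset m1; m2]; split=> //.
  by rewrite cardfs2 m12.
by move=> m; rewrite in_fset2 => /orP [] /eqP ->.
Qed.

Lemma on_axes_qresult M P : on_axes P -> on_axes (qresult M P).
Proof.
move=> axP _ /qresultP [m [g [_ Pg _ ->]]]; rewrite /apply_move.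
by case: (m.1 == 1); case: (axP g Pg) => /= ->; auto.
Qed.

Lemma heapmax_qresult_le b a M P : on_axes P ->
  (forall m : cmove, m \in M -> (m.1 == 1) = b -> a <= m.2) ->
  heapmax b (qresult M P) <= heapmax b P - a.
Proof.
move=> axP geM; apply/heapmax_leP => _ /qresultP [m [g [Mm Pg lmg ->]]].
move: lmg; rewrite legalE coord_apply_move => /andP [/andP [_ m0] le].
have := heapmax_ge b Pg; case: (eqVneq b (m.1 == 1)) => [eb | ].
  by have := geM m Mm (esym eb); lia.
rewrite negb_eqb => /addbP nb; rewrite (on_axes_coord axP Pg) // nb.
exact: leq_trans m0 le.
Qed.

Lemma heapmax_qresult_ge P {M m} : m \in M -> valid_move m ->
  heapmax (m.1 == 1) P - m.2 <= heapmax (m.1 == 1) (qresult M P).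
Proof.
move=> Mm vm; set b := m.1 == 1.
case: (leqP (heapmax b P) m.2) => [/eqP -> // | lt].
have [g Pg eg] := bigmax_seq_attained (leq_ltn_trans (leq0n _) lt).
have Qg : apply_move m g \in qresult M P.
  by apply/qresultP; exists m, g; rewrite legalE vm -eg (ltnW lt).
rewrite [heapmax b P]eg; apply: leq_trans (heapmax_ge b Qg).
by rewrite coord_apply_move eqxx.
Qed.

Lemma valid_hmove b a : valid_move (hmove b a) = (0 < a).
Proof. by case: b. Qed.

Lemma heapmax_qresult_eq c a M P : on_axes P -> 0 < a -> hmove c a \in M ->
  (forall m : cmove, m \in M -> (m.1 == 1) = c -> a <= m.2) ->
  heapmax c (qresult M P) = heapmax c P - a.
Proof.
move=> axP a0 Mca geM; apply/eqP; rewrite eqn_leq heapmax_qresult_le //=.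
by have := heapmax_qresult_ge P Mca; rewrite hmove_side valid_hmove; apply.
Qed.

Lemma qmoveA_two_heaps {P} b x y : on_axes P ->
  0 < x <= heapmax b P -> 0 < y <= heapmax (~~ b) P ->
  exists2 Q, qmoveA P Q &
    heapmax b Q = heapmax b P - x /\ heapmax (~~ b) Q = heapmax (~~ b) P - y.
Proof.
move=> axP hx hy; have /andP [x0 _] := hx; have /andP [y0 _] := hy.
exists (qresult [fset hmove b x; hmove (~~ b) y] P).
  by apply: qmoveA_pair; [case: (b) | exact: hmove_legal_in ..].
split; apply: heapmax_qresult_eq; rewrite ?fset21 ?fset22 // => m.
  by rewrite in_fset2 => /orP [] /eqP ->; rewrite hmove_side //; case: (b).
by rewrite in_fset2 => /orP [] /eqP ->; rewrite hmove_side //; case: (b).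
Qed.

Lemma qmoveA_one_heap {P} b a1 a2 : on_axes P -> 0 < a1 < a2 -> a2 <= heapmax b P ->
  exists2 Q, qmoveA P Q & heapmax b Q = heapmax b P - a1 /\ heapmax (~~ b) Q = 0.
Proof.
move=> axP /andP [a10 a12] a2P.
exists (qresult [fset hmove b a1; hmove b a2] P).
  apply: qmoveA_pair; first by rewrite xpair_eqE eqxx neq_ltn a12.
    by apply: hmove_legal_in; rewrite a10 (leq_trans (ltnW a12)).
  by apply: hmove_legal_in; rewrite (ltn_trans a10 a12).
split.
  apply: heapmax_qresult_eq; rewrite ?fset21 // => m.
  by rewrite in_fset2 => /orP [] /eqP -> _ /=; [| apply: ltnW].
apply/eqP; rewrite -leqn0 -(subnn (heapmax (~~ b) P)).
apply: heapmax_qresult_le => // m.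
by rewrite in_fset2 => /orP [] /eqP ->; rewrite hmove_side; case: (b).
Qed.

Lemma qmoveA_single_heap {P} b n : on_axes P -> 0 < n < heapmax b P ->
  exists2 Q, qmoveA P Q & heapmax b Q = n /\ heapmax (~~ b) Q = 0.
Proof.
move=> axP /andP [n0 lt]; have [q0 | qpos] := posnP (heapmax (~~ b) P).
  have [|Q PQ [E1 E2]] :=
    qmoveA_one_heap b (heapmax b P - n) (heapmax b P) axP _ (leqnn _).
    by apply/andP; split; lia.
  by exists Q => //; split; lia.
have [| |Q PQ [E1 E2]] := qmoveA_two_heaps b (heapmax b P - n) (heapmax (~~ b) P) axP.
- by apply/andP; split; lia.
- by rewrite qpos leqnn.
by exists Q => //; split; lia.
Qed.

(* For p, q > 0 this is max(p,q) - 1 + [p == q]. *)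
Definition value (p q : nat) : nat := maxn p q - (p != q).

Lemma valueC p q : value p q = value q p.
Proof. by rewrite /value maxnC eq_sym. Qed.

Lemma value_n0 p : value p 0 = p.-1.
Proof. by case: p => // n; rewrite /value maxn0 subn1. Qed.

Lemma valuenn p : value p p = p.
Proof. by rewrite /value maxnn eqxx subn0. Qed.

Lemma value_neq p q p' q' : p' <= p.-1 -> q' <= q.-1 ->
  (q = 0 -> 0 < p') -> (p = 0 -> 0 < q') -> value p' q' != value p q.
Proof.
move=> hp hq hq0 hp0; rewrite /value.
by case: (eqVneq p' q') => [e | ne]; case: (eqVneq p q) => [e' | ne'] /=; lia.
Qed.

Definition qvalue (P : qpos) : nat := value (heapmax true P) (heapmax false P).

Definition qsize (P : qpos) : nat := heapmax true P + heapmax false P.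

Lemma qvalueE b P : qvalue P = value (heapmax b P) (heapmax (~~ b) P).
Proof. by case: b; rewrite // valueC. Qed.

Lemma qmoveA_heapmax_lt b {P Q} : on_axes P -> qmoveA P Q ->
  heapmax b Q <= (heapmax b P).-1.
Proof.
move=> axP /qmoveAE [M [_ legM ->]]; rewrite -subn1.
apply: heapmax_qresult_le => // m /legM [g _].
by rewrite legalE => /andP [/andP [_ ->]].
Qed.

Lemma qmoveA_heapmax_pos b {P Q} : qmoveA P Q -> heapmax (~~ b) P = 0 ->
  0 < heapmax b Q.
Proof.
move=> /qmoveAE [M [M2 legM ->]] emptyP.
(* Heap [~~ b] is empty, so all moves of [M] act on heap [b]; being distinct,
   one of them removes fewer than [heapmax b P] tokens. *)
have onb (m : cmove) :
    m \in M -> [/\ valid_move m, (m.1 == 1) = b & m.2 <= heapmax b P].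
  move=> /legM [g Pg]; rewrite legalE => /andP [vm le].
  have := leq_trans le (heapmax_ge (m.1 == 1) Pg).
  case: (eqVneq b (m.1 == 1)) => [<- // | ].
  rewrite negb_eqb => /addbP <-; rewrite emptyP leqn0.
  by case/andP: vm => _; rewrite lt0n => /negPf ->.
have [m1 [m2 [M1 M2' m12]]] := cardfs_gt1_pair M2.
have [v1 s1 le1] := onb _ M1; have [v2 s2 le2] := onb _ M2'.
have [m Mm lt] : exists2 m : cmove, m \in M & m.2 < heapmax b P.
  have ne : m1.2 != m2.2.
    by apply: contra_neq m12; apply: valid_move_eq; rewrite // s1 s2.
  case: ltngtP ne => // [lt | gt] _; first by exists m1 => //; apply: leq_trans lt le2.
  by exists m2 => //; apply: leq_trans gt le1.
have [vm sm _] := onb _ Mm; have := heapmax_qresult_ge P Mm vm; rewrite sm; lia.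
Qed.

Lemma qmoveA_spec P Q : on_axes P -> qmoveA P Q ->
  [/\ on_axes Q, qsize Q < qsize P & qvalue Q != qvalue P].
Proof.
move=> axP PQ; have /qmoveAE [M [_ _ eQ]] := PQ.
have lt1 := qmoveA_heapmax_lt true axP PQ; have lt0 := qmoveA_heapmax_lt false axP PQ.
have /= pos1 := qmoveA_heapmax_pos true PQ; have /= pos0 := qmoveA_heapmax_pos false PQ.
split; first by rewrite eQ; apply: on_axes_qresult.
  by rewrite /qsize; lia.
exact: value_neq.
Qed.

Lemma qmoveA_mex P k :
  on_axes P -> k < qvalue P -> exists2 Q, qmoveA P Q & qvalue Q = k.
Proof.
move=> axP; have [b le] : exists b, heapmax (~~ b) P <= heapmax b P.
  case: (leqP (heapmax false P) (heapmax true P)) => h; first by exists true.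
  by exists false; apply: ltnW.
rewrite (qvalueE b) /value (maxn_idPl le) => ltk.
have [small | big] := ltnP k (heapmax b P).-1.
  have [|Q PQ [E1 E2]] := qmoveA_single_heap b k.+1 axP; first by apply/andP; split; lia.
  by exists Q; rewrite // (qvalueE b) E1 E2 value_n0.
have e : heapmax (~~ b) P = heapmax b P by move: ltk; case: eqVneq => // _ /=; lia.
have p0 : 0 < heapmax b P by lia.
have q0 : 0 < heapmax (~~ b) P by rewrite e.
have [Q PQ [E1 E2]] := qmoveA_two_heaps b 1 1 axP p0 q0.
by exists Q; rewrite // (qvalueE b) E1 E2 e valuenn; lia.
Qed.

Theorem lemma6 (i j : nat) (hi : (0 < i)%N) (hj : (0 < j)%N) :
  game_equiv qmoveA [fset ((i, 0) : cpos); ((0, j) : cpos)]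
             nim_mv (maxn i j - 1 + (i == j))%N.
Proof.
set P := [fset ((i, 0) : cpos); ((0, j) : cpos)].
have axP : on_axes P by move=> g; rewrite in_fset2 => /orP [] /eqP ->; [right | left].
suff -> : (maxn i j - 1 + (i == j))%N = qvalue P.
  exact: (nim_valuation_equiv qmoveA_spec qmoveA_mex axP).
rewrite /qvalue !heapmax_fset2 /= maxn0 max0n /value.
by case: eqVneq => [e | ne] /=; lia.
Qed.
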